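(* Let $n,k$ be positive integers with $n \geq 3(n-k)$ and $n\geq k$, and let $C\in\mathcal{K}_{k+1}(n+1)$. Let $M=\{k+2,k+3,\dots,2n-k+1\}$, and let $S_C$ be the set of chords of $C$ having neither their start point nor their end point in $M$. Let $a$ be the chord of $C$ whose end point is $2n-k+2$. Let $m$ be the number of chords $b\in S_C$ with $s_b<s_a$. Then $m<n-k+1$.
   Context: A linear chord diagram of size $n$ is a partition of $\{1,2,\dots,2n\}$ into blocks of size two, called chords. For a chord $c=\{s_c,e_c\}$ with $s_c<e_c$, $s_c$ is its start point, $e_c$ its end point, and its length is $e_c-s_c$. $\mathcal{K}_k(n)$ is the set of all linear chord diagrams of size $n$ in which every chord has length at least $k$. (Under the hypotheses, $2n-k+2$ is an end point of some chord of $C$.) *)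

From mathcomp Require Import all_boot.
Set Implicit Arguments. Unset Strict Implicit. Unset Printing Implicit Defensive.

(* A linear chord diagram of size n is a (duplicate-free) list of chords whose
   endpoints, taken together, are exactly {1, ..., 2n}, each once; i.e. the
   list of chords is a partition of {1..2n} into blocks of size two.
   The order of the list is irrelevant. *)
Definition chord := (nat * nat)%type.
Definition start (c : chord) : nat := c.1.
Definition endp (c : chord) : nat := c.2.
Definition chord_length (c : chord) : nat := endp c - start c.

Definition points (C : seq chord) : seq nat :=
  flatten [seq [:: start c; endp c] | c <- C].

Definition is_lcd (n : nat) (C : seq chord) : Prop :=
  all (fun c => start c < endp c) C /\ perm_eq (points C) (iota 1 (2 * n)).

Definition in_K (k n : nat) (C : seq chord) : Prop :=
  is_lcd n C /\ all (fun c => k <= chord_length c) C.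

(** Every chord has length at least [k + 1], so [a] starts at or before
    [2(n-k)+1] and a chord ending in [M] at or before [2(n-k)].  Hence the [m]
    chords of [S_C] starting before [a], the chords ending in [M], and [a]
    itself are pairwise distinct chords (no chord of [S_C] ends in [M]) starting
    in [{1, ..., 2(n-k)+1}]; as start points are distinct,
    [m + #(chords ending in M) + 1 <= 2(n-k) + 1].  At most [k + 1] chords end
    at the [k + 1] points right of [M], so at least [n - k] of the [n + 1]
    chords end in [M]. *)

From mathcomp Require Import all_boot zify.

Set Implicit Arguments.
Unset Strict Implicit.
Unset Printing Implicit Defensive.

Lemma sub_in_count (T : eqType) (p q : pred T) (s : seq T) :
  {in s, subpred p q} -> count p s <= count q s.
Proof.
elim: s => //= x s IH pq; rewrite leq_add //.
  by case: (boolP (p x)) => // /pq ->; rewrite ?mem_head.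
by apply: IH => y ys; apply: pq; rewrite inE ys orbT.
Qed.

Lemma count_predU_disjoint (T : eqType) (p q : pred T) (s : seq T) :
  {in s, forall x, p x -> ~~ q x} -> count (predU p q) s = count p s + count q s.
Proof.
move=> pq; rewrite -count_predUI.
have -> : count (predI p q) s = 0.
  rewrite (@eq_in_count _ _ pred0) ?count_pred0 // => x xs /=.
  by case: (boolP (p x)) => // /(pq x xs)/negbTE.
by rewrite addn0.
Qed.

Lemma count_iota_ltn (h m N : nat) :
  count (fun x => x < h) (iota m N) = minn (h - m) N.
Proof.
elim: N m => [|N IH] m /=; first by rewrite minn0.
by rewrite IH; case: (ltnP m h) => /= mh; lia.
Qed.

Lemma count_points (p : pred nat) (C : seq chord) :
  count p (points C) = count (p \o start) C + count (p \o endp) C.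
Proof. by elim: C => //= c C IH; rewrite /points /= in IH *; rewrite IH; lia. Qed.

Lemma size_points (C : seq chord) : size (points C) = 2 * size C.
Proof. by elim: C => //= c C IH; rewrite /points /= in IH *; rewrite IH; lia. Qed.

Lemma mem_points_start (C : seq chord) (c : chord) :
  c \in C -> start c \in points C.
Proof.
by move=> cC; apply/flattenP; exists [:: start c; endp c];
  [apply/mapP; exists c | rewrite mem_head].
Qed.

Section LinearChordDiagram.

Variables (N : nat) (C : seq chord).
Hypothesis lcdC : is_lcd N C.

Lemma lcd_size : size C = N.
Proof. by have := perm_size lcdC.2; rewrite size_points size_iota; lia. Qed.

Lemma lcd_start_gt0 (c : chord) : c \in C -> 0 < start c.
Proof.
move=> /mem_points_start; rewrite (perm_mem lcdC.2) mem_iota.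
by case/andP.
Qed.

Lemma lcd_count_start (p : pred nat) :
  count (p \o start) C <= count p (iota 1 (2 * N)).
Proof. by rewrite -(permP lcdC.2) count_points leq_addr. Qed.

Lemma lcd_count_endp (p : pred nat) :
  count (p \o endp) C <= count p (iota 1 (2 * N)).
Proof. by rewrite -(permP lcdC.2) count_points leq_addl. Qed.

Lemma lcd_count_start_leq (h : nat) :
  count (fun c => start c <= h) C <= h.
Proof.
by apply: leq_trans (lcd_count_start (fun x => x < h.+1)) _; rewrite count_iota_ltn; lia.
Qed.

Lemma lcd_count_endp_gtn (h : nat) :
  count (fun c => h < endp c) C <= 2 * N - h.
Proof.
apply: leq_trans (lcd_count_endp (fun x => h < x)) _.
rewrite (@eq_count _ _ (predC (fun x => x < h.+1))) => [|x]; last by rewrite /= ltnNge.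
have := count_predC (fun x => x < h.+1) (iota 1 (2 * N)).
by rewrite count_iota_ltn size_iota; lia.
Qed.

End LinearChordDiagram.

Lemma in_K_chord (k N : nat) (C : seq chord) (c : chord) :
  in_K k N C -> c \in C -> 0 < start c /\ start c + k <= endp c.
Proof.
move=> [lcdC longC] cC; split; first exact: (lcd_start_gt0 lcdC cC).
by have := allP lcdC.1 c cC; have := allP longC c cC; rewrite /chord_length; lia.
Qed.

Section LongChords.

Variables (n k : nat) (C : seq chord).
Hypothesis KC : in_K k.+1 n.+1 C.

Let early (c : chord) := start c <= 2 * (n - k) + 1.
Let ends_in_M (c : chord) := endp c <= 2 * n - k + 1.

Lemma count_ends_in_M : n - k <= count ends_in_M C.
Proof.
have ends_right : count (predC ends_in_M) C <= k.+1.
  rewrite (@eq_count _ _ (fun c => 2 * n - k + 1 < endp c)) => [|c]; last first.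
    by rewrite /= /ends_in_M ltnNge.
  by apply: leq_trans (lcd_count_endp_gtn KC.1 _) _; lia.
by have := count_predC ends_in_M C; rewrite (lcd_size KC.1); lia.
Qed.

Lemma count_early : count early C <= 2 * (n - k) + 1.
Proof. exact: lcd_count_start_leq KC.1 _. Qed.

Variable a : chord.
Hypotheses (aC : a \in C) (endp_a : endp a = 2 * n - k + 2).

Let inM (x : nat) := (k + 2 <= x) && (x <= 2 * n - k + 1).
Let avoids_M (c : chord) := ~~ inM (start c) && ~~ inM (endp c).
Let before_a (c : chord) := start c < start a.

Lemma count_before_a_avoiding_M_early :
  count (predI before_a avoids_M) C + count ends_in_M C + 1 <= count early C.
Proof.
have [_ long_a] := in_K_chord KC aC.
have a_once : 0 < count (pred1 a) C by rewrite -has_count has_pred1.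
apply: leq_trans (leq_add (leqnn _) a_once) _.
rewrite -count_predU_disjoint => [|c cC]; last first.
  have [c0 long_c] := in_K_chord KC cC.
  rewrite /= /before_a /avoids_M /inM /ends_in_M; lia.
rewrite -count_predU_disjoint => [|c _]; last first.
  by rewrite /= /before_a /ends_in_M; case: eqP => [-> | //]; rewrite ltnn endp_a; lia.
apply: sub_in_count => c cC /=; have [_ long_c] := in_K_chord KC cC.
rewrite /before_a /avoids_M /ends_in_M /early; case: eqP => [-> | _]; lia.
Qed.

Lemma count_before_a_avoiding_M : count before_a (filter avoids_M C) <= n - k.
Proof.
have := count_before_a_avoiding_M_early; have := count_ends_in_M; have := count_early.
by rewrite count_filter; lia.
Qed.

End LongChords.

Theorem lemma3 (n k : nat) (C : seq chord) (a : chord) :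
  0 < n -> 0 < k -> 3 * (n - k) <= n -> k <= n ->
  in_K k.+1 n.+1 C ->
  a \in C -> endp a = 2 * n - k + 2 ->
  let inM := fun x : nat => (k + 2 <= x) && (x <= 2 * n - k + 1) in
  let S_C := [seq b <- C | ~~ inM (start b) && ~~ inM (endp b)] in
  let m := count (fun b => start b < start a) S_C in
  m < n - k + 1.
Proof.
move=> _ _ _ _ KC aC endp_a /=.
apply: leq_ltn_trans (count_before_a_avoiding_M KC aC endp_a) _.
by rewrite addn1.
Qed.
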